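(* Let $G$ be a finite simple connected graph and $\sigma$ a confined position on $G$, with complement $\sigma_c$ defined by $\sigma_c(v)=2\deg(v)-1-\sigma(v)$. Then $p(\sigma_c)=p(\sigma)$.
   Context: Parallel chip-firing game: on a finite simple connected graph $G$, a position $\sigma$ assigns a nonnegative integer $\sigma(v)$ to each vertex. Writing $\Phi_\sigma(v)$ for the number of neighbors $w$ of $v$ with $\sigma(w)\ge\deg(w)$, the step operator is $U\sigma(v)=\sigma(v)+\Phi_\sigma(v)$ if $\sigma(v)\le \deg(v)-1$ and $U\sigma(v)=\sigma(v)+\Phi_\sigma(v)-\deg(v)$ otherwise. A position is confined if every vertex satisfies $\Phi_\sigma(v)\le\sigma(v)\le\Phi_\sigma(v)+\deg(v)-1$. The period $p(\sigma)$ is the least positive integer $p$ with $U^{t+p}\sigma=U^t\sigma$ for all sufficiently large $t$. *)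

From mathcomp Require Import all_boot.
Set Implicit Arguments. Unset Strict Implicit. Unset Printing Implicit Defensive.

Definition simple_graph (T : finType) (e : rel T) : Prop :=
  symmetric e /\ irreflexive e.

Definition connected_graph (T : finType) (e : rel T) : Prop :=
  forall x y : T, connect e x y.

Definition deg (T : finType) (e : rel T) (v : T) : nat := #|[pred w | e v w]|.

Definition position (T : finType) := {ffun T -> nat}.

Definition Phi (T : finType) (e : rel T) (s : position T) (v : T) : nat :=
  #|[pred w | e v w && (deg e w <= s w)]|.

(* Step operator. sigma(v) <= deg(v) - 1 is written sigma(v) < deg(v)
   (equivalent over the integers). *)
Definition U (T : finType) (e : rel T) (s : position T) : position T :=
  [ffun v => if s v < deg e v then s v + Phi e s v
             else s v + Phi e s v - deg e v].

(* Confined: Phi(v) <= sigma(v) <= Phi(v) + deg(v) - 1 (integer reading). *)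
Definition confined (T : finType) (e : rel T) (s : position T) : Prop :=
  forall v, Phi e s v <= s v /\ s v < Phi e s v + deg e v.

Definition complement (T : finType) (e : rel T) (s : position T) : position T :=
  [ffun v => (deg e v).*2 - 1 - s v].

Definition eventually_periodic (T : finType) (e : rel T) (s : position T) (p : nat) : Prop :=
  exists t0, forall t, t0 <= t -> iter (t + p) (U e) s = iter t (U e) s.

Definition is_period (T : finType) (e : rel T) (s : position T) (p : nat) : Prop :=
  0 < p /\ eventually_periodic e s p /\
  forall q, 0 < q -> eventually_periodic e s q -> p <= q.

From mathcomp Require Import all_boot zify.
Set Implicit Arguments. Unset Strict Implicit. Unset Printing Implicit Defensive.

(* Complementation commutes with the step operator on all positions with
   sigma(v) < 2 deg(v), a class containing every confined position and stable
   under U: a neighbour w fires for sigma_c exactly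
   when it does not fire for sigma, so Phi_{sigma_c}(v) = deg(v) - Phi_sigma(v).
   Hence the orbits of sigma and sigma_c correspond term by term through the
   involution sigma |-> sigma_c and have the same eventual periods. *)

Section Complement.

Variables (T : finType) (e : rel T).

Definition bounded_position (s : position T) : Prop :=
  forall v, s v < (deg e v).*2.

Lemma Phi_le_deg (s : position T) v : Phi e s v <= deg e v.
Proof. by apply: subset_leq_card; apply/subsetP => w /andP[]. Qed.

Lemma confined_bounded (s : position T) : confined e s -> bounded_position s.
Proof. by move=> sconf v; have [_] := sconf v; have := Phi_le_deg s v; lia. Qed.

Lemma complementK (s : position T) :
  bounded_position s -> complement e (complement e s) = s.
Proof. by move=> sb; apply/ffunP => v; rewrite !ffunE; have := sb v; lia. Qed.

Lemma U_bounded (s : position T) : bounded_position s -> bounded_position (U e s).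
Proof.
by move=> sb v; rewrite ffunE; have := sb v; have := Phi_le_deg s v; case: ifP; lia.
Qed.

Lemma Phi_complement (s : position T) v : bounded_position s ->
  Phi e (complement e s) v = deg e v - Phi e s v.
Proof.
move=> sb; rewrite /Phi.
rewrite [deg e v](esym (cardID [pred w | deg e w <= s w] [pred w | e v w])) addKn.
apply: eq_card => w; rewrite !inE ffunE.
by case: (e v w); rewrite ?andbF //= andbT; have := sb w; lia.
Qed.

Lemma U_complement (s : position T) : bounded_position s ->
  U e (complement e s) = complement e (U e s).
Proof.
move=> sb; apply/ffunP => v; rewrite !ffunE Phi_complement //.
by have := sb v; have := Phi_le_deg s v; do 2!case: ifP; lia.
Qed.

Lemma iter_U_bounded (s : position T) t :
  bounded_position s -> bounded_position (iter t (U e) s).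
Proof. by move=> sb; elim: t => //= t; apply: U_bounded. Qed.

Lemma iter_U_complement (s : position T) t : bounded_position s ->
  iter t (U e) (complement e s) = complement e (iter t (U e) s).
Proof.
by move=> sb; elim: t => //= t ->; rewrite U_complement //; apply: iter_U_bounded.
Qed.

Lemma eventually_periodic_complement (s : position T) q : bounded_position s ->
  eventually_periodic e (complement e s) q <-> eventually_periodic e s q.
Proof.
move=> sb; split=> -[t0 per]; exists t0 => t /per; rewrite !iter_U_complement //.
  by move=> /(congr1 (complement e)); rewrite !complementK //; apply: iter_U_bounded.
by move=> ->.
Qed.

End Complement.

Theorem corollary2p4 (T : finType) (e : rel T) (s : position T) :
  simple_graph e -> connected_graph e -> confined e s ->
  forall p : nat, is_period e (complement e s) p <-> is_period e s p.
Proof.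
move=> _ _ /confined_bounded sb p.
have ep_c q := eventually_periodic_complement q sb.
rewrite /is_period ep_c.
by split=> -[p_gt0 [per minp]]; split=> //; split=> // q q_gt0 /ep_c; apply: minp.
Qed.
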